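(* Let $M,N$ be $\mathtt{dBang}$ terms with $M\to_S N$ (one surface step). Then for every resource term $n\sqsubset N$ there is a resource term $m\sqsubset M$ such that $m$ reduces to $n$ in one surface resource step.
   Context: \textbf{dBang.} Terms: $M,N ::= x \mid \lambda x.M \mid MN \mid M[N/x] \mid\ !M \mid \mathrm{der}\,M$ ($M[N/x]$ explicit substitution binding $x$); $M\{N/x\}$ capture-avoiding substitution. List contexts $L ::= \square\mid L[N/x]$. Root rules: $L\langle\lambda x.M\rangle N \mapsto L\langle M[N/x]\rangle$; $M[L\langle !N\rangle/x]\mapsto L\langle M\{N/x\}\rangle$; $\mathrm{der}(L\langle !N\rangle)\mapsto L\langle N\rangle$. Surface contexts: $S ::= \square\mid\lambda x.S\mid SM\mid MS\mid S[M/x]\mid M[S/x]\mid\mathrm{der}\,S$; $\to_S$ is the closure of the root rules under surface contexts. \textbf{Resources.} Resource terms: $m,n ::= x\mid\lambda x.m\mid mn\mid m[n/x]\mid\mathrm{der}\,m\mid[m_1,\dots,m_k]$ ($k\ge0$ multisets). Resource list contexts $l::=\square\mid l[n/x]$. Root resource rules: $\mathrm{der}(l\langle[m]\rangle)\to l\langle m\rangle$; $\mathrm{der}(l\langle[m_1,\dots,m_k]\rangle)\to\emptyset$ if $k\ne1$; $l\langle\lambda x.m\rangle n\to l\langle m[n/x]\rangle$; $m[l\langle[n_1,\dots,n_k]\rangle/x]\to l\langle m\{n_{\sigma(1)}/x_1,\dots,n_{\sigma(k)}/x_k\}\rangle$ for every permutation $\sigma$ when $x_1,\dots,x_k$ are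 exactly the free occurrences of $x$ in $m$, and $\to\emptyset$ otherwise. Surface resource reduction is the closure under resource surface contexts $s::=\square\mid\lambda x.s\mid s n\mid m s\mid s[n/x]\mid m[s/x]\mid\mathrm{der}\,s$ (not inside bags). \textbf{Approximation.} $x\sqsubset x$; $\lambda x.m\sqsubset\lambda x.M$ if $m\sqsubset M$; $mn\sqsubset MN$ and $m[n/x]\sqsubset M[N/x]$ if $m\sqsubset M,n\sqsubset N$; $\mathrm{der}\,m\sqsubset\mathrm{der}\,M$ if $m\sqsubset M$; $[m_1,\dots,m_k]\sqsubset\ !M$ for any $k\ge0$ if every $m_i\sqsubset M$. *)

From Stdlib Require Import List Arith Permutation.
Import ListNotations.

(* ES M N  stands for  M[N/x] : the variable x (index 0) is bound in M only. *)
Inductive term : Type :=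
| Var : nat -> term
| Lam : term -> term
| App : term -> term -> term
| ES  : term -> term -> term
| Bang : term -> term
| Der : term -> term.

Fixpoint lift (c d : nat) (M : term) : term :=
  match M with
  | Var i => if i <? c then Var i else Var (i + d)
  | Lam M => Lam (lift (S c) d M)
  | App M N => App (lift c d M) (lift c d N)
  | ES M N => ES (lift (S c) d M) (lift c d N)
  | Bang M => Bang (lift c d M)
  | Der M => Der (lift c d M)
  end.

Fixpoint subst (k : nat) (N : term) (M : term) : term :=
  match M with
  | Var i => if i <? k then Var i else if i =? k then lift 0 k N else Var (i - 1)
  | Lam M => Lam (subst (S k) N M)
  | App M P => App (subst k N M) (subst k N P)
  | ES M P => ES (subst (S k) N M) (subst k N P)
  | Bang M => Bang (subst k N M)
  | Der M => Der (subst k N M)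
  end.

(* List contexts L ::= [] | L[N/x]; the list head is the outermost substitution:
   plug (N :: L) M = (plug L M)[N/x]. *)
Fixpoint plug (L : list term) (M : term) : term :=
  match L with
  | [] => M
  | N :: L' => ES (plug L' M) N
  end.

Inductive root : term -> term -> Prop :=
| root_dB : forall L M N,
    root (App (plug L (Lam M)) N) (plug L (ES M (lift 0 (length L) N)))
| root_sBang : forall L M N,
    root (ES M (plug L (Bang N))) (plug L (subst 0 N (lift 1 (length L) M)))
| root_dBang : forall L N,
    root (Der (plug L (Bang N))) (plug L N).

Inductive sstep : term -> term -> Prop :=
| s_root : forall M N, root M N -> sstep M N
| s_lam : forall M N, sstep M N -> sstep (Lam M) (Lam N)
| s_appl : forall M M' N, sstep M M' -> sstep (App M N) (App M' N)
| s_appr : forall M N N', sstep N N' -> sstep (App M N) (App M N')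
| s_esl : forall M M' N, sstep M M' -> sstep (ES M N) (ES M' N)
| s_esr : forall M N N', sstep N N' -> sstep (ES M N) (ES M N')
| s_der : forall M M', sstep M M' -> sstep (Der M) (Der M').

(* RBag ms is the multiset [m1,...,mk], represented by a list (order irrelevant up to
   the permutation quantification in the substitution rule). *)
Inductive rterm : Type :=
| RVar : nat -> rterm
| RLam : rterm -> rterm
| RApp : rterm -> rterm -> rterm
| RES  : rterm -> rterm -> rterm
| RDer : rterm -> rterm
| RBag : list rterm -> rterm.

Fixpoint rlift (c d : nat) (m : rterm) : rterm :=
  match m with
  | RVar i => if i <? c then RVar i else RVar (i + d)
  | RLam m => RLam (rlift (S c) d m)
  | RApp m n => RApp (rlift c d m) (rlift c d n)
  | RES m n => RES (rlift (S c) d m) (rlift c d n)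
  | RDer m => RDer (rlift c d m)
  | RBag ms => RBag (map (rlift c d) ms)
  end.

Fixpoint rplug (l : list rterm) (m : rterm) : rterm :=
  match l with
  | [] => m
  | n :: l' => RES (rplug l' m) n
  end.

(* Linear substitution: lsub k ns m r  means r = m{n_1/x_1,...,n_j/x_j} where
   x_1,...,x_j are exactly the free occurrences of index k in m, in left-to-right
   order, and ns = [n_1;...;n_j] (so j must equal the number of occurrences). *)
Inductive lsub : nat -> list rterm -> rterm -> rterm -> Prop :=
| lsub_var_eq : forall k n, lsub k [n] (RVar k) (rlift 0 k n)
| lsub_var_lt : forall k i, i < k -> lsub k [] (RVar i) (RVar i)
| lsub_var_gt : forall k i, k < i -> lsub k [] (RVar i) (RVar (i - 1))
| lsub_lam : forall k ns m r, lsub (S k) ns m r -> lsub k ns (RLam m) (RLam r)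
| lsub_app : forall k ns1 ns2 m1 m2 r1 r2,
    lsub k ns1 m1 r1 -> lsub k ns2 m2 r2 ->
    lsub k (ns1 ++ ns2) (RApp m1 m2) (RApp r1 r2)
| lsub_es : forall k ns1 ns2 m1 m2 r1 r2,
    lsub (S k) ns1 m1 r1 -> lsub k ns2 m2 r2 ->
    lsub k (ns1 ++ ns2) (RES m1 m2) (RES r1 r2)
| lsub_der : forall k ns m r, lsub k ns m r -> lsub k ns (RDer m) (RDer r)
| lsub_bag : forall k ns ms rs, lsub_list k ns ms rs -> lsub k ns (RBag ms) (RBag rs)
with lsub_list : nat -> list rterm -> list rterm -> list rterm -> Prop :=
| lsub_nil : forall k, lsub_list k [] [] []
| lsub_cons : forall k ns1 ns2 m ms r rs,
    lsub k ns1 m r -> lsub_list k ns2 ms rs ->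
    lsub_list k (ns1 ++ ns2) (m :: ms) (r :: rs).

(* Root resource rules, as a relation  rroot m r  meaning "r is a summand of the
   (finite sum of resource terms) that m reduces to".  Rules whose result is the
   empty sum (der of a bag of size <> 1; substitution with a mismatched number of
   occurrences) contribute no summand and hence no clause. *)
Inductive rroot : rterm -> rterm -> Prop :=
| rroot_der : forall l m, rroot (RDer (rplug l (RBag [m]))) (rplug l m)
| rroot_beta : forall l m n,
    rroot (RApp (rplug l (RLam m)) n) (rplug l (RES m (rlift 0 (length l) n)))
| rroot_subst : forall l m ns ns' r,
    Permutation ns ns' ->
    lsub 0 ns' (rlift 1 (length l) m) r ->
    rroot (RES m (rplug l (RBag ns))) (rplug l r).

Inductive rsstep : rterm -> rterm -> Prop :=
| rs_root : forall m r, rroot m r -> rsstep m r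
| rs_lam : forall m m', rsstep m m' -> rsstep (RLam m) (RLam m')
| rs_appl : forall m m' n, rsstep m m' -> rsstep (RApp m n) (RApp m' n)
| rs_appr : forall m n n', rsstep n n' -> rsstep (RApp m n) (RApp m n')
| rs_esl : forall m m' n, rsstep m m' -> rsstep (RES m n) (RES m' n)
| rs_esr : forall m n n', rsstep n n' -> rsstep (RES m n) (RES m n')
| rs_der : forall m m', rsstep m m' -> rsstep (RDer m) (RDer m').

Inductive approx : rterm -> term -> Prop :=
| ap_var : forall i, approx (RVar i) (Var i)
| ap_lam : forall m M, approx m M -> approx (RLam m) (Lam M)
| ap_app : forall m n M N, approx m M -> approx n N -> approx (RApp m n) (App M N)
| ap_es : forall m n M N, approx m M -> approx n N -> approx (RES m n) (ES M N)
| ap_der : forall m M, approx m M -> approx (RDer m) (Der M)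
| ap_bag : forall ms M, (forall m, In m ms -> approx m M) -> approx (RBag ms) (Bang M).

(* Approximation commutes with every term constructor, so a surface step is
   simulated constructor by constructor and only root steps need work.  There
   an approximant of the reduct is read backwards.  The key point is that an
   approximant of [P{N/k}] splits as an approximant [p] of [P] together with
   the list [ns] of approximants of [N] that were plugged, in left-to-right
   order, into the occurrences of [k] in [p]; the bag [ns] approximates [!N],
   and the resource substitution rule (with the identity permutation) rebuilds
   the approximant from [p] and [ns]. *)

From Stdlib Require Import List Arith Permutation Lia.
Import ListNotations.

Lemma map_preimage_Forall {A B : Type} (f : A -> B) (P : A -> Prop) (ys : list B) :
  (forall y, In y ys -> exists x, P x /\ f x = y) ->
  exists xs, Forall P xs /\ map f xs = ys.
Proof.
  induction ys as [|y ys IH]; intros Hys.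
  - exists []. auto.
  - destruct (Hys y (or_introl eq_refl)) as (x & Hx & <-).
    destruct IH as (xs & Hxs & <-).
    + intros y' Hy'. apply Hys. right. exact Hy'.
    + exists (x :: xs). auto.
Qed.

Lemma approx_bag_app (ns1 ns2 : list rterm) (N : term) :
  approx (RBag ns1) (Bang N) -> approx (RBag ns2) (Bang N) ->
  approx (RBag (ns1 ++ ns2)) (Bang N).
Proof.
  intros H1 H2. inversion H1; inversion H2; subst.
  constructor. intros m Hm. apply in_app_or in Hm. destruct Hm; auto.
Qed.

Lemma approx_lift_inv (N : term) (c d : nat) (r : rterm) :
  approx r (lift c d N) -> exists n, approx n N /\ rlift c d n = r.
Proof.
  revert c d r.
  induction N as [i|N IH|N1 IH1 N2 IH2|N1 IH1 N2 IH2|N IH|N IH];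
    intros c d r Hr; simpl in Hr.
  - exists (RVar i). split; [constructor|].
    simpl. destruct (i <? c); inversion Hr; reflexivity.
  - inversion Hr as [|m M Hm| | | |]; subst.
    destruct (IH _ _ _ Hm) as (n & Hn & <-).
    exists (RLam n). split; [constructor; assumption | reflexivity].
  - inversion Hr as [| |m1 m2 M1 M2 Hm1 Hm2| | |]; subst.
    destruct (IH1 _ _ _ Hm1) as (n1 & Hn1 & <-).
    destruct (IH2 _ _ _ Hm2) as (n2 & Hn2 & <-).
    exists (RApp n1 n2). split; [constructor; assumption | reflexivity].
  - inversion Hr as [| | |m1 m2 M1 M2 Hm1 Hm2| |]; subst.
    destruct (IH1 _ _ _ Hm1) as (n1 & Hn1 & <-).
    destruct (IH2 _ _ _ Hm2) as (n2 & Hn2 & <-).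
    exists (RES n1 n2). split; [constructor; assumption | reflexivity].
  - inversion Hr as [| | | | |ms M Hms]; subst.
    destruct (map_preimage_Forall (rlift c d) (fun n => approx n N) ms)
      as (ns & Hns & <-).
    + intros r Hr'. apply IH, Hms, Hr'.
    + exists (RBag ns). split; [|reflexivity].
      constructor. apply Forall_forall. exact Hns.
  - inversion Hr as [| | | |m M Hm|]; subst.
    destruct (IH _ _ _ Hm) as (n & Hn & <-).
    exists (RDer n). split; [constructor; assumption | reflexivity].
Qed.

Lemma approx_lsub_list_collect (k : nat) (P N : term) (rs : list rterm) :
  (forall r, In r rs -> exists p ns,
      approx p P /\ approx (RBag ns) (Bang N) /\ lsub k ns p r) ->
  exists ps ns,
    approx (RBag ps) (Bang P) /\ approx (RBag ns) (Bang N) /\ lsub_list k ns ps rs.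
Proof.
  induction rs as [|r rs IH]; intros Hrs.
  - exists [], []. split; [|split]; [constructor; contradiction ..|constructor].
  - destruct (Hrs r (or_introl eq_refl)) as (p & ns1 & Hp & Hns1 & Hr).
    destruct IH as (ps & ns2 & Hps & Hns2 & Hrs').
    + intros r' Hr'. apply Hrs. right. exact Hr'.
    + exists (p :: ps), (ns1 ++ ns2). split; [|split].
      * inversion Hps as [| | | | |ps' P' Hps']; subst.
        constructor. intros m [<-|Hm]; auto.
      * apply approx_bag_app; assumption.
      * constructor; assumption.
Qed.

Lemma approx_subst_inv (P : term) (k : nat) (N : term) (r : rterm) :
  approx r (subst k N P) ->
  exists p ns, approx p P /\ approx (RBag ns) (Bang N) /\ lsub k ns p r.
Proof.
  revert k r.
  induction P as [i|P IH|P1 IH1 P2 IH2|P1 IH1 P2 IH2|P IH|P IH];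
    intros k r Hr; simpl in Hr.
  - assert (Hnil : approx (RBag []) (Bang N)) by (constructor; contradiction).
    destruct (Nat.ltb_spec i k) as [Hik|Hki];
      [|destruct (Nat.eqb_spec i k) as [->|Hik]].
    + inversion Hr; subst.
      exists (RVar i), []. split; [constructor|split; [exact Hnil|]].
      apply lsub_var_lt. exact Hik.
    + destruct (approx_lift_inv _ _ _ _ Hr) as (n & Hn & <-).
      exists (RVar k), [n]. split; [constructor|split; [|constructor]].
      constructor. intros m [<-|[]]. exact Hn.
    + inversion Hr; subst.
      exists (RVar i), []. split; [constructor|split; [exact Hnil|]].
      apply lsub_var_gt. lia.
  - inversion Hr as [|m M Hm| | | |]; subst.
    destruct (IH _ _ Hm) as (p & ns & Hp & Hns & Hsub).
    exists (RLam p), ns. split; [constructor|split; [|constructor]]; assumption.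
  - inversion Hr as [| |m1 m2 M1 M2 Hm1 Hm2| | |]; subst.
    destruct (IH1 _ _ Hm1) as (p1 & ns1 & Hp1 & Hns1 & Hsub1).
    destruct (IH2 _ _ Hm2) as (p2 & ns2 & Hp2 & Hns2 & Hsub2).
    exists (RApp p1 p2), (ns1 ++ ns2).
    split; [constructor|split; [apply approx_bag_app|constructor]]; assumption.
  - inversion Hr as [| | |m1 m2 M1 M2 Hm1 Hm2| |]; subst.
    destruct (IH1 _ _ Hm1) as (p1 & ns1 & Hp1 & Hns1 & Hsub1).
    destruct (IH2 _ _ Hm2) as (p2 & ns2 & Hp2 & Hns2 & Hsub2).
    exists (RES p1 p2), (ns1 ++ ns2).
    split; [constructor|split; [apply approx_bag_app|constructor]]; assumption.
  - inversion Hr as [| | | | |ms M Hms]; subst.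
    destruct (approx_lsub_list_collect k P N ms) as (ps & ns & Hps & Hns & Hsub).
    + intros m Hm. apply IH, Hms, Hm.
    + exists (RBag ps), ns. split; [|split; [|constructor]]; assumption.
  - inversion Hr as [| | | |m M Hm|]; subst.
    destruct (IH _ _ Hm) as (p & ns & Hp & Hns & Hsub).
    exists (RDer p), ns. split; [constructor|split; [|constructor]]; assumption.
Qed.

Lemma approx_plug_inv (L : list term) (P : term) (n : rterm) :
  approx n (plug L P) ->
  exists l p, n = rplug l p /\ approx p P /\ Forall2 approx l L.
Proof.
  revert n. induction L as [|Q L IH]; intros n Hn; simpl in Hn.
  - exists [], n. auto.
  - inversion Hn as [| | |m q M Q' Hm Hq| |]; subst.
    destruct (IH _ Hm) as (l & p & -> & Hp & Hl).
    exists (q :: l), p. auto.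
Qed.

Lemma approx_plug (l : list rterm) (L : list term) (p : rterm) (P : term) :
  Forall2 approx l L -> approx p P -> approx (rplug l p) (plug L P).
Proof.
  intros Hl Hp. induction Hl; simpl; [exact Hp | constructor; assumption].
Qed.

Lemma root_approx_expand (M N : term) :
  root M N -> forall n, approx n N -> exists m, approx m M /\ rsstep m n.
Proof.
  intros Hroot n Hn.
  destruct Hroot as [L P Q|L P Q|L Q];
    destruct (approx_plug_inv _ _ _ Hn) as (l & p & -> & Hp & Hl);
    pose proof (Forall2_length Hl) as Hlen.
  - inversion Hp as [| | |p' q P' Q' Hp' Hq| |]; subst.
    destruct (approx_lift_inv _ _ _ _ Hq) as (q0 & Hq0 & <-).
    exists (RApp (rplug l (RLam p')) q0). split.
    + constructor; [apply approx_plug; [|constructor]|]; assumption.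
    + rewrite <- Hlen. apply rs_root, rroot_beta.
  - destruct (approx_subst_inv _ _ _ _ Hp) as (p' & qs & Hp' & Hqs & Hsub).
    destruct (approx_lift_inv _ _ _ _ Hp') as (m & Hm & <-).
    exists (RES m (rplug l (RBag qs))). split.
    + constructor; [|apply approx_plug]; assumption.
    + apply rs_root. apply rroot_subst with (ns' := qs).
      * apply Permutation_refl.
      * rewrite Hlen. exact Hsub.
  - exists (RDer (rplug l (RBag [p]))). split.
    + constructor. apply approx_plug; [assumption|].
      constructor. intros m [<-|[]]. exact Hp.
    + apply rs_root, rroot_der.
Qed.

Theorem mainTheorem4 :
  forall (M N : term), sstep M N ->
  forall n : rterm, approx n N ->
  exists m : rterm, approx m M /\ rsstep m n.
Proof.
  intros M N Hstep.
  induction Hstep as [M N Hroot| | | | | |]; intros n Hn.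
  - exact (root_approx_expand M N Hroot n Hn).
  - inversion Hn as [|n' N' Hn'| | | |]; subst.
    destruct (IHHstep _ Hn') as (m & Hm & Hmn).
    exists (RLam m). split; [constructor | apply rs_lam]; assumption.
  - inversion Hn as [| |n1 n2 N1 N2 Hn1 Hn2| | |]; subst.
    destruct (IHHstep _ Hn1) as (m & Hm & Hmn).
    exists (RApp m n2). split; [constructor | apply rs_appl]; assumption.
  - inversion Hn as [| |n1 n2 N1 N2 Hn1 Hn2| | |]; subst.
    destruct (IHHstep _ Hn2) as (m & Hm & Hmn).
    exists (RApp n1 m). split; [constructor | apply rs_appr]; assumption.
  - inversion Hn as [| | |n1 n2 N1 N2 Hn1 Hn2| |]; subst.
    destruct (IHHstep _ Hn1) as (m & Hm & Hmn).
    exists (RES m n2). split; [constructor | apply rs_esl]; assumption.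
  - inversion Hn as [| | |n1 n2 N1 N2 Hn1 Hn2| |]; subst.
    destruct (IHHstep _ Hn2) as (m & Hm & Hmn).
    exists (RES n1 m). split; [constructor | apply rs_esr]; assumption.
  - inversion Hn as [| | | |n' N' Hn'|]; subst.
    destruct (IHHstep _ Hn') as (m & Hm & Hmn).
    exists (RDer m). split; [constructor | apply rs_der]; assumption.
Qed.
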